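(* There exist $a_1\ge1$ and $b_1\in(0,1)$, depending only on $\alpha$, such that for every $a>a_1$ and every $b\in(0,b_1)$ we have $\mathcal D(t,b)\subset B(p,r_p)$ for all $p\in\mathcal T(a,b)$ and all $t\in[z_p,-1]$.
   Context: $\mathbb H=\mathbb R^3$, $p=(x_p,y_p,z_p)$, $\rho_p=\sqrt{x_p^2+y_p^2}$, group law $(x,y,z)\cdot(x',y',z')=(x+x',y+y',z+z'+\tfrac12(xy'-yx'))$, dilations $\delta_\lambda(x,y,z)=(\lambda x,\lambda y,\lambda^2z)$. Fix $\alpha>0$ such that $d_\alpha(p,q)=\inf\{r>0:\delta_{1/r}(p^{-1}\cdot q)\in B_\alpha\}$ is a distance, $B_\alpha$ the closed Euclidean ball of radius $\alpha$ at $0$. $B(p,r)=\{q:d_\alpha(q,p)\le r\}$, $r_p=d_\alpha(0,p)$. $\mathcal T(a,b)=\{p: z_p<-a,\ \rho_p<b\}$ and $\mathcal D(t,b)=\{q: z_q=t,\ \rho_q<b\}$. *)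

From Stdlib Require Import Reals.
Open Scope R_scope.

(* Points of the Heisenberg group H = R^3. *)
Record pt := mkpt { xc : R; yc : R; zc : R }.

Definition hmul (p q : pt) : pt :=
  mkpt (xc p + xc q) (yc p + yc q)
       (zc p + zc q + / 2 * (xc p * yc q - yc p * xc q)).

Definition hinv (p : pt) : pt := mkpt (- xc p) (- yc p) (- zc p).

Definition horigin : pt := mkpt 0 0 0.

Definition dil (l : R) (p : pt) : pt := mkpt (l * xc p) (l * yc p) (l * l * zc p).

Definition rho (p : pt) : R := sqrt (xc p ^ 2 + yc p ^ 2).

Definition in_Balpha (alpha : R) (p : pt) : Prop :=
  xc p ^ 2 + yc p ^ 2 + zc p ^ 2 <= alpha ^ 2.

Definition dset (alpha : R) (p q : pt) (r : R) : Prop :=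
  0 < r /\ in_Balpha alpha (dil (/ r) (hmul (hinv p) q)).

Definition is_inf (E : R -> Prop) (m : R) : Prop :=
  (forall x, E x -> m <= x) /\ (forall m', (forall x, E x -> m' <= x) -> m' <= m).

Definition is_d_alpha (alpha : R) (d : pt -> pt -> R) : Prop :=
  forall p q, is_inf (dset alpha p q) (d p q).

Definition is_distance (d : pt -> pt -> R) : Prop :=
  (forall p q, 0 <= d p q) /\
  (forall p q, d p q = 0 <-> p = q) /\
  (forall p q, d p q = d q p) /\
  (forall p q s, d p s <= d p q + d q s).

Definition ball (d : pt -> pt -> R) (p : pt) (r : R) (q : pt) : Prop := d q p <= r.

Definition rpt (d : pt -> pt -> R) (p : pt) : R := d horigin p.

Definition Tset (a b : R) (p : pt) : Prop := zc p < - a /\ rho p < b.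

Definition Dset (t b : R) (q : pt) : Prop := zc q = t /\ rho q < b.

From Stdlib Require Import Reals Lra Psatz.
Open Scope R_scope.

(* Write w = r^-2 for a radius r.  For p deep below the plane (z_p <= -1) and
   q, p close to the z-axis, the vertical component of q^-1 p is at least 1/2
   closer to 0 than z_p, because the cross term 1/2 (x_p y_q - x_q y_p) is tiny.
   As long as w |z_p| >= alpha/2, this vertical gain outweighs the horizontal
   displacement of q^-1 p, so every radius r <= sqrt(-2 z_p / alpha) that
   witnesses d(0,p) <= r also witnesses d(q,p) <= r.  Larger radii are dominated
   by sqrt(-2 z_p / alpha) itself, which witnesses d(0,p). *)

Definition gauge2 (w : R) (v : pt) : R :=
  w * (xc v ^ 2 + yc v ^ 2) + w ^ 2 * zc v ^ 2.

Lemma dset_gauge2 (alpha : R) (p q : pt) (r : R) :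
  dset alpha p q r <-> 0 < r /\ gauge2 ((/ r) ^ 2) (hmul (hinv p) q) <= alpha ^ 2.
Proof.
  unfold dset, in_Balpha, gauge2, dil.
  cbn [xc yc zc].
  replace ((/ r * xc (hmul (hinv p) q)) ^ 2 + (/ r * yc (hmul (hinv p) q)) ^ 2
           + (/ r * / r * zc (hmul (hinv p) q)) ^ 2)
    with ((/ r) ^ 2 * (xc (hmul (hinv p) q) ^ 2 + yc (hmul (hinv p) q) ^ 2)
          + ((/ r) ^ 2) ^ 2 * zc (hmul (hinv p) q) ^ 2) by ring.
  reflexivity.
Qed.

Lemma hmul_hinv_origin (p : pt) : hmul (hinv horigin) p = p.
Proof. destruct p; unfold hmul, hinv, horigin; cbn; f_equal; ring. Qed.

Lemma rho_sq_lt (p : pt) (b : R) : rho p < b -> xc p ^ 2 + yc p ^ 2 < b ^ 2.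
Proof.
  unfold rho; intros Hlt.
  assert (Hnn : 0 <= xc p ^ 2 + yc p ^ 2)
    by (pose proof (pow2_ge_0 (xc p)); pose proof (pow2_ge_0 (yc p)); lra).
  rewrite <- (pow2_sqrt _ Hnn).
  pose proof (sqrt_pos (xc p ^ 2 + yc p ^ 2)).
  nra.
Qed.

Lemma planar_sq_dist_le (x1 y1 x2 y2 : R) :
  (x1 - x2) ^ 2 + (y1 - y2) ^ 2 <= 2 * ((x1 ^ 2 + y1 ^ 2) + (x2 ^ 2 + y2 ^ 2)).
Proof. pose proof (pow2_ge_0 (x1 + x2)); pose proof (pow2_ge_0 (y1 + y2)); lra. Qed.

Lemma cross_sq_le (x1 y1 x2 y2 : R) :
  (x1 * y2 - y1 * x2) ^ 2 <= (x1 ^ 2 + y1 ^ 2) * (x2 ^ 2 + y2 ^ 2).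
Proof. pose proof (pow2_ge_0 (x1 * x2 + y1 * y2)); nra. Qed.

(* Expanding (z + 1/2)^2 = z^2 - (-z - 1/4) shows that the vertical gain is at
   least w * (w * |z| / 2) >= w * alpha / 4 >= w * h. *)
Lemma gauge2_vertical_gain (alpha w h z z' : R) :
  0 < w -> z <= -1/2 -> alpha <= -2 * z * w -> h <= alpha / 4 ->
  z' ^ 2 <= (z + 1/2) ^ 2 ->
  w * h + w ^ 2 * z' ^ 2 <= w ^ 2 * z ^ 2.
Proof.
  intros Hw Hz Hwz Hh Hz'.
  assert (Hgain : h <= w * (- z - 1/4)) by nra.
  assert (w ^ 2 * z' ^ 2 <= w ^ 2 * (z + 1/2) ^ 2) by (apply Rmult_le_compat_l; nra).
  nra.
Qed.

Section NearAxis.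

Variables (alpha b : R) (p q : pt).
Hypothesis alpha_gt0 : 0 < alpha.
Hypothesis b_sq_small : b ^ 2 <= alpha / 16.
Hypothesis b_sq_le1 : b ^ 2 <= 1.
Hypothesis rho_p : xc p ^ 2 + yc p ^ 2 < b ^ 2.
Hypothesis rho_q : xc q ^ 2 + yc q ^ 2 < b ^ 2.
Hypothesis zp_le_zq : zc p <= zc q.
Hypothesis zq_le : zc q <= -1.

Lemma vertical_sq_le :
  zc (hmul (hinv q) p) ^ 2 <= (zc p + 1/2) ^ 2.
Proof.
  unfold hmul, hinv; cbn [xc yc zc].
  pose proof (cross_sq_le (xc p) (yc p) (xc q) (yc q)) as Hcross.
  assert (Hb4 : b ^ 2 * b ^ 2 <= 1) by (pose proof (pow2_ge_0 b); nra).
  assert (Hsmall : (xc p * yc q - yc p * xc q) ^ 2 <= 1) by nra.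
  assert (Habs : -1 <= xc p * yc q - yc p * xc q <= 1) by (split; nra).
  nra.
Qed.

Lemma planar_sq_le : xc (hmul (hinv q) p) ^ 2 + yc (hmul (hinv q) p) ^ 2 <= alpha / 4.
Proof.
  unfold hmul, hinv; cbn [xc yc zc].
  pose proof (planar_sq_dist_le (xc p) (yc p) (xc q) (yc q)).
  replace (- xc q + xc p) with (xc p - xc q) by ring.
  replace (- yc q + yc p) with (yc p - yc q) by ring.
  lra.
Qed.

Lemma dset_origin_shift (r : R) :
  alpha * r ^ 2 <= -2 * zc p -> dset alpha horigin p r -> dset alpha q p r.
Proof.
  rewrite !dset_gauge2, hmul_hinv_origin.
  intros Hr [Hr0 Hgp]; split; [exact Hr0|].
  set (w := (/ r) ^ 2) in *.
  assert (Hw : 0 < w) by (unfold w; apply pow_lt, Rinv_0_lt_compat, Hr0).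
  assert (Hwr : w * r ^ 2 = 1) by (unfold w; field; lra).
  assert (Hwz : alpha <= -2 * zc p * w).
  { replace alpha with (alpha * r ^ 2 * w) by (transitivity (alpha * (w * r ^ 2)); [ring | rewrite Hwr; ring]).
    apply Rmult_le_compat_r; lra. }
  unfold gauge2 in *.
  pose proof (gauge2_vertical_gain alpha w _ (zc p) _ Hw ltac:(lra) Hwz
                planar_sq_le vertical_sq_le).
  assert (0 <= w * (xc p ^ 2 + yc p ^ 2)) by nra.
  lra.
Qed.

Lemma dset_origin_critical :
  dset alpha horigin p (sqrt (-2 * zc p / alpha)).
Proof.
  set (c := -2 * zc p / alpha).
  assert (Hc : 0 < c) by (unfold c; apply Rdiv_lt_0_compat; lra).
  apply dset_gauge2; rewrite hmul_hinv_origin.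
  split; [apply sqrt_lt_R0, Hc|].
  rewrite pow_inv, (pow2_sqrt _ (Rlt_le _ _ Hc)).
  unfold gauge2, c.
  set (w := / (-2 * zc p / alpha)).
  assert (Hwz : w * zc p = - alpha / 2) by (unfold w; field; lra).
  assert (Hw : 0 < w) by exact (Rinv_0_lt_compat _ Hc).
  assert (Hw_le : w <= alpha / 2) by nra.
  replace (w ^ 2 * zc p ^ 2) with ((w * zc p) ^ 2) by ring.
  rewrite Hwz.
  assert (w * (xc p ^ 2 + yc p ^ 2) <= alpha / 2 * b ^ 2) by nra.
  nra.
Qed.

Lemma dset_origin_dominated (r : R) :
  dset alpha horigin p r -> exists r', dset alpha q p r' /\ r' <= r.
Proof.
  intros Hr.
  set (r0 := sqrt (-2 * zc p / alpha)).
  assert (Hr0_sq : alpha * r0 ^ 2 = -2 * zc p).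
  { unfold r0; rewrite pow2_sqrt; [field; lra|].
    apply Rlt_le, Rdiv_lt_0_compat; lra. }
  destruct (Rle_lt_dec r r0) as [Hle | Hlt].
  - exists r; split; [|lra].
    apply dset_origin_shift; [|exact Hr].
    destruct Hr as [Hr_pos _].
    rewrite <- Hr0_sq.
    apply Rmult_le_compat_l; [lra|]; apply pow_incr; lra.
  - exists r0; split; [|lra].
    apply dset_origin_shift; [lra|].
    apply dset_origin_critical.
Qed.

End NearAxis.

Lemma is_inf_le_of_dominated (E F : R -> Prop) (m n : R) :
  is_inf E m -> is_inf F n -> (forall r, E r -> exists r', F r' /\ r' <= r) ->
  n <= m.
Proof.
  intros [_ HEglb] [HFlb _] Hdom.
  apply HEglb; intros r Er.
  destruct (Hdom r Er) as [r' [Fr' Hle]].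
  specialize (HFlb r' Fr'); lra.
Qed.

Lemma lt_min_sq_le (alpha b : R) :
  0 < alpha -> 0 < b -> b < Rmin (1/4) (alpha/4) -> b ^ 2 <= alpha / 16 /\ b ^ 2 <= 1.
Proof.
  intros Halpha Hb Hmin.
  pose proof (Rmin_l (1/4) (alpha/4)); pose proof (Rmin_r (1/4) (alpha/4)).
  split; [destruct (Rle_lt_dec alpha 1); nra | nra].
Qed.

Theorem lemma4p5 :
  forall (alpha : R) (d : pt -> pt -> R),
    0 < alpha -> is_d_alpha alpha d -> is_distance d ->
    exists a1 b1 : R, 1 <= a1 /\ 0 < b1 /\ b1 < 1 /\
      forall a b : R, a1 < a -> 0 < b -> b < b1 ->
        forall p : pt, Tset a b p ->
          forall t : R, zc p <= t -> t <= -1 ->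
            forall q : pt, Dset t b q -> ball d p (rpt d p) q.
Proof.
  intros alpha d Halpha Hd _.
  exists 1, (Rmin (1/4) (alpha/4)).
  pose proof (Rmin_l (1/4) (alpha/4)).
  assert (0 < Rmin (1/4) (alpha/4)) by (apply Rmin_glb_lt; lra).
  split; [lra | split; [lra | split; [lra |]]].
  intros a b _ Hb Hbb p [_ Hrp] t Hzp Ht q [Hzq Hrq]; subst t.
  destruct (lt_min_sq_le alpha b Halpha Hb Hbb) as [Hb2 Hb1].
  apply (is_inf_le_of_dominated _ _ _ _ (Hd horigin p) (Hd q p)).
  apply (dset_origin_dominated alpha b p q); auto using rho_sq_lt.
Qed.
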